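(* Let $\mathcal{P}\subseteq[0,1]^n$ be a polytope and let $\tilde F_1,\tilde F_2$ be two different open faces of $\mathcal{P}$. If $\tilde F_1$ and $\tilde F_2$ are both contained in $(0,1)^n$, then no Bernoulli factory for $\mathcal{P}$ exists.
   Context: A face of $\mathcal{P}$ is a set of the form $F=\arg\max_{p\in\mathcal{P}}w^Tp$ for some $w\in\mathbb{R}^n$; its dimension is that of its affine span. The open face $\tilde F$ corresponding to a face $F$ is the set of points of $F$ that belong to no face of $\mathcal{P}$ of lower dimension. A Bernoulli factory with output set $V$ (for inputs $x\in[0,1]^n$) is a (possibly infinite) rooted binary tree whose internal nodes are labeled by an index $i\in[n]$ or a known constant $c\in(0,1)$ and whose leaves are labeled by elements of $V$; on input $x$ one walks from the root, at a node labeled $i$ flipping a fresh independent coin that is $1$ with probability $x_i$, at a node labeled $c$ a fresh coin of bias $c$, following the edge labeled by the outcome, and outputs the label of the leaf reached. For a polytope $\mathcal{P}$ with vertex set $V$, a Bernoulli factory for $\mathcal{P}$ is such a factory with output set $V$ that terminates almost surely on $\mathcal{P}\cap(0,1)^n$ and satisfies $\mathbb{E}[\mathcal{F}(x)]=x$ for all $x\in\mathcal{P}\cap(0,1)^n$. *)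

From HB Require Import structures.
From mathcomp Require Import all_boot all_order all_algebra.
From mathcomp Require Import all_classical all_reals all_analysis.

Set Implicit Arguments.
Unset Strict Implicit.
Unset Printing Implicit Defensive.

Import Order.TTheory GRing.Theory Num.Theory.
Import numFieldNormedType.Exports.
Local Open Scope classical_set_scope.
Local Open Scope ring_scope.

Section Defs.
Variables (R : realType) (n : nat).

Definition dotp (w p : 'rV[R]_n) : R := \sum_(i < n) w 0 i * p 0 i.

Definition cube01 : set 'rV[R]_n := [set x | forall i, 0 <= x 0 i <= 1].
Definition cube01_open : set 'rV[R]_n := [set x | forall i, 0 < x 0 i < 1].

Definition convhull (S : seq 'rV[R]_n) : set 'rV[R]_n :=
  [set x | exists lam : 'I_(size S) -> R,
     (forall i, 0 <= lam i) /\ \sum_(i < size S) lam i = 1 /\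
     x = \sum_(i < size S) lam i *: S`_i].

Definition is_face (P F : set 'rV[R]_n) : Prop :=
  exists w : 'rV[R]_n,
    F = [set p | P p /\ forall q, P q -> dotp w q <= dotp w p].

Definition is_vertex (P : set 'rV[R]_n) (v : 'rV[R]_n) : Prop :=
  is_face P [set v].

Definition aff_indep (k : nat) (p : 'I_k.+1 -> 'rV[R]_n) : bool :=
  row_free (\matrix_(i < k) (p (lift ord0 i) - p ord0)).

Definition affdim (A : set 'rV[R]_n) (d : nat) : Prop :=
  (exists p : 'I_d.+1 -> 'rV[R]_n, (forall i, A (p i)) /\ aff_indep p) /\
  ~ (exists p : 'I_d.+2 -> 'rV[R]_n, (forall i, A (p i)) /\ aff_indep p).

Definition open_face (P F : set 'rV[R]_n) : set 'rV[R]_n :=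
  [set x | F x /\ forall G, is_face P G -> G x ->
     forall dG dF, affdim G dG -> affdim F dF -> ~ (dG < dF)%N].

Inductive node : Type :=
  | Coin of 'I_n
  | Const of R
  | Leaf of 'rV[R]_n.

(* A possibly infinite rooted binary tree is given by the labels of all
   positions, a position being the finite sequence of edge labels
   (coin outcomes, true = 1) from the root. Only positions all of whose
   proper prefixes are internal nodes belong to the tree. *)
Definition tree := seq bool -> node.

Definition internal (nd : node) : bool :=
  if nd is Leaf _ then false else true.

Definition in_tree (T : tree) (s : seq bool) : Prop :=
  forall k, (k < size s)%N -> internal (T (take k s)).

Definition step (x : 'rV[R]_n) (nd : node) (b : bool) : R :=
  match nd with
  | Coin i => if b then x 0 i else 1 - x 0 i
  | Const c => if b then c else 1 - c
  | Leaf _ => 0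
  end.

Definition pathprob (T : tree) (x : 'rV[R]_n) (s : seq bool) : R :=
  \prod_(k < size s) step x (T (take k s)) (nth false s k).

Definition is_leaf (T : tree) (s : seq bool) : bool :=
  [forall k : 'I_(size s), internal (T (take k s))] && ~~ internal (T s).

Definition term_prob (T : tree) (x : 'rV[R]_n) (K : nat) : R :=
  \sum_(m < K) \sum_(t : m.-tuple bool)
     (if is_leaf T t then pathprob T x t else 0).

Definition partial_mean (T : tree) (x : 'rV[R]_n) (i : 'I_n) (K : nat) : R :=
  \sum_(m < K) \sum_(t : m.-tuple bool)
     (if T t is Leaf v then
        (if is_leaf T t then pathprob T x t * v 0 i else 0) else 0).

Definition factory_with_outputs (V : 'rV[R]_n -> Prop) (T : tree) : Prop :=
  forall s, in_tree T s ->
    match T s with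
    | Const c => 0 < c < 1
    | Leaf v => V v
    | Coin _ => True
    end.

Definition bernoulli_factory_for (P : set 'rV[R]_n) (T : tree) : Prop :=
  factory_with_outputs (is_vertex P) T /\
  forall x, P x -> cube01_open x ->
    (term_prob T x K @[K --> \oo] --> (1 : R)) /\
    (forall i, partial_mean T x i K @[K --> \oo] --> x 0 i).

End Defs.

From HB Require Import structures.
From mathcomp Require Import all_boot all_order all_algebra.
From mathcomp Require Import all_classical all_reals all_analysis.
From mathcomp Require Import lra.

Set Implicit Arguments.
Unset Strict Implicit.
Unset Printing Implicit Defensive.

Import Order.TTheory GRing.Theory Num.Theory.
Import numFieldNormedType.Exports.
Local Open Scope classical_set_scope.
Local Open Scope ring_scope.

(* Let x be a point of P in the open cube maximising a linear form w over P.
   On input x every leaf of a Bernoulli factory is reached with positive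
   probability, every leaf label v lies in P, so w v <= w x, and the mean of
   w v is w x: hence every leaf label lies on the hyperplane w = w x.  Since
   the mean output at any other input z of P in the open cube is z itself,
   also w z = w x.  So a face of P containing one point of the open cube
   contains all of them.  With x, y in the open faces of F1, F2 this gives
   x in F2 and y in F1; and a point of the open face of F1 lying in a face F2
   forces F1 to be contained in F2, since otherwise F1 and F2 would meet in a
   face of smaller dimension through that point.  Hence F1 = F2. *)

Lemma mean_eq_ub (R : numDomainType) k (mu a : 'I_k -> R) M :
  (forall i, 0 < mu i) -> \sum_i mu i = 1 -> (forall i, a i <= M) ->
  \sum_i mu i * a i = M -> forall i, a i = M.
Proof.
move=> mu_gt0 mu1 a_le aM i.
have gap0 : \sum_i mu i * (M - a i) = 0.
  under eq_bigr do rewrite mulrBr.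
  by rewrite sumrB -mulr_suml mu1 mul1r aM subrr.
have gap_ge0 j : true -> 0 <= mu j * (M - a j).
  by move=> _; rewrite mulr_ge0 ?subr_ge0 // ltW.
move: (psumr_eq0P gap_ge0 gap0 (i := i) isT) => /eqP.
by rewrite mulf_eq0 subr_eq0 gt_eqF //= => /eqP.
Qed.

Section AffineIndependence.
Variables (R : realType) (n : nat).
Implicit Types (w p : 'rV[R]_n) (A : set 'rV[R]_n).

Lemma dotpDl w1 w2 p : dotp (w1 + w2) p = dotp w1 p + dotp w2 p.
Proof.
by rewrite /dotp -big_split; apply: eq_bigr => i _; rewrite mxE mulrDl.
Qed.

Lemma dotp_is_linear w : linear_for *%R (dotp w).
Proof.
move=> a p q; rewrite /dotp mulr_sumr -big_split.
by apply: eq_bigr => i _; rewrite !mxE mulrDr mulrCA.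
Qed.

HB.instance Definition _ w :=
  GRing.isLinear.Build R 'rV[R]_n R *%R (dotp w) (dotp_is_linear w).

Lemma aff_indepP k (p : 'I_k.+1 -> 'rV[R]_n) :
  reflect (forall c : 'I_k -> R,
             \sum_i c i *: (p (lift ord0 i) - p ord0) = 0 -> forall i, c i = 0)
          (aff_indep p).
Proof.
set M := \matrix_(i < k) (p (lift ord0 i) - p ord0).
have combE (c : 'I_k -> R) :
    (\row_i c i) *m M = \sum_i c i *: (p (lift ord0 i) - p ord0).
  by rewrite mulmx_sum_row; apply: eq_bigr => i _; rewrite rowK mxE.
apply: (iffP idP) => [M_free c c0 i | c0].
  have /eqP : (\row_i c i) *m M = 0 by rewrite combE.
  by rewrite (mulmx_free_eq0 _ M_free) => /eqP/rowP/(_ i); rewrite !mxE.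
apply: inj_row_free => v vM0; apply/rowP => i; rewrite mxE.
apply: (c0 (fun j => v 0 j)); rewrite -combE -[RHS]vM0; congr (_ *m _).
by apply/rowP => j; rewrite !mxE.
Qed.

Lemma aff_indep_le_dim k (p : 'I_k.+1 -> 'rV[R]_n) : aff_indep p -> (k <= n)%N.
Proof.
by rewrite /aff_indep -row_leq_rank => /leq_trans; apply; exact: rank_leq_col.
Qed.

Lemma aff_indep_widen j k (p : 'I_k.+1 -> 'rV[R]_n) (le_jk : (j < k.+1)%N) :
  aff_indep p -> aff_indep (fun i : 'I_j.+1 => p (widen_ord le_jk i)).
Proof.
have le_jk' : (j <= k)%N := le_jk.
move=> /aff_indepP p_indep; apply/aff_indepP => c c0 i.
pose c' (l : 'I_k) := if insub (l : nat) is Some l' then c l' else 0.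
have c'W (l : 'I_j) : c' (widen_ord le_jk' l) = c l by rewrite /c' /= valK.
rewrite -c'W; apply: p_indep; rewrite -[RHS]c0.
rewrite (bigID (fun l : 'I_k => (l < j)%N)) /= [X in _ + X]big1 ?addr0.
  rewrite (big_ord_narrow le_jk'); apply: eq_bigr => l _.
  by rewrite c'W; congr (_ *: (p _ - p _)); apply: val_inj.
by move=> l /negbTE l_ge; rewrite /c' insubN ?l_ge // scale0r.
Qed.

Lemma aff_indep_extend k (f : 'I_k.+2 -> 'rV[R]_n) w :
  aff_indep (fun i : 'I_k.+1 => f (widen_ord (leqnSn _) i)) ->
  (forall i : 'I_k.+1, dotp w (f (widen_ord (leqnSn _) i)) = dotp w (f ord0)) ->
  dotp w (f ord_max) != dotp w (f ord0) -> aff_indep f.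
Proof.
move=> /aff_indepP f_indep on_hyp off_hyp; apply/aff_indepP => c.
have fW (i : 'I_k) : f (lift ord0 (widen_ord (leqnSn k) i)) =
                     f (widen_ord (leqnSn k.+1) (lift ord0 i)).
  by congr f; apply: val_inj.
have f0 : f ord0 = f (widen_ord (leqnSn k.+1) ord0) by congr f; apply: val_inj.
have lift0_max : lift ord0 (ord_max : 'I_k.+1) = ord_max by apply: val_inj.
rewrite big_ord_recr /= lift0_max.
set v := \sum_(i < k) _; have v_on_hyp : dotp w v = 0.
  rewrite linear_sum big1 // => i _.
  by rewrite linearZ linearB /= fW on_hyp subrr mulr0.
move=> c0; have c_max : c ord_max = 0.
  move/(congr1 (dotp w)): (c0).
  rewrite linearD /= v_on_hyp add0r linearZ linearB linear0 /=.
  by move/eqP; rewrite mulf_eq0 subr_eq0 (negbTE off_hyp) orbF => /eqP.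
rewrite c_max scale0r addr0 in c0.
have c_widen (i : 'I_k) : c (widen_ord (leqnSn k) i) = 0.
  apply: (f_indep (fun l => c (widen_ord (leqnSn k) l))); rewrite -[RHS]c0.
  by apply: eq_bigr => l _; rewrite fW f0.
move=> i; case: (unliftP ord_max i) => [l ->|-> //].
by rewrite -(c_widen l); congr c; apply: val_inj; exact: lift_max.
Qed.

Definition aff_indep_in A k :=
  exists p : 'I_k.+1 -> 'rV[R]_n, (forall i, A (p i)) /\ aff_indep p.

Lemma aff_indep_in0 A a : A a -> aff_indep_in A 0.
Proof. by exists (fun=> a); split => //; apply/aff_indepP => c _ []. Qed.

Lemma aff_indep_in_le A j k :
  (j <= k)%N -> aff_indep_in A k -> aff_indep_in A j.
Proof.
move=> le_jk [p [pA p_indep]].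
exists (fun i => p (widen_ord (le_jk : (j < k.+1)%N) i)); split => //.
exact: aff_indep_widen.
Qed.

Lemma affdim_max A d j : affdim A d -> aff_indep_in A j -> (j <= d)%N.
Proof.
case=> _ not_indep j_indep; rewrite leqNgt; apply/negP => lt_dj.
exact/not_indep/(aff_indep_in_le lt_dj).
Qed.

Lemma affdim_unique A d1 d2 : affdim A d1 -> affdim A d2 -> d1 = d2.
Proof.
move=> dim1 dim2; apply/eqP.
by rewrite eqn_leq (affdim_max dim2 dim1.1) (affdim_max dim1 dim2.1).
Qed.

Lemma affdim_exists A a : A a -> exists d, affdim A d.
Proof.
move=> Aa; apply: contrapT => no_dim.
have indep k : aff_indep_in A k.
  elim: k => [|k IHk]; first exact: aff_indep_in0 Aa.
  by apply: contrapT => not_indep; apply: no_dim; exists k.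
have [p [_ /aff_indep_le_dim]] := indep n.+1.
by rewrite ltnn.
Qed.

End AffineIndependence.

Section Faces.
Variables (R : realType) (n : nat) (S : seq 'rV[R]_n).
Notation P := (convhull S).
Implicit Types (w p q x : 'rV[R]_n) (F G : set 'rV[R]_n).

Lemma mem_convhull (i : 'I_(size S)) : P S`_i.
Proof.
exists (fun j => (j == i)%:R); split; [by move=> j; rewrite ler0n | split].
  by rewrite (bigD1 i) //= eqxx big1 ?addr0 // => j /negbTE ->.
rewrite (bigD1 i) //= eqxx scale1r big1 ?addr0 // => j /negbTE ->.
by rewrite scale0r.
Qed.

Lemma convhull_comb k (mu : 'I_k -> R) (q : 'I_k -> 'rV[R]_n) :
  (forall i, 0 <= mu i) -> \sum_i mu i = 1 -> (forall i, P (q i)) ->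
  P (\sum_i mu i *: q i).
Proof.
move=> mu_ge0 mu1 /choice [lam lamP].
exists (fun j => \sum_i mu i * lam i j); split; [|split].
- by move=> j; apply: sumr_ge0 => i _; rewrite mulr_ge0 // (lamP i).1.
- rewrite exchange_big -[RHS]mu1; apply: eq_bigr => i _.
  by rewrite -mulr_sumr (lamP i).2.1 mulr1.
- under [RHS]eq_bigr do rewrite scaler_suml.
  rewrite exchange_big /=; apply: eq_bigr => i _.
  by rewrite (lamP i).2.2 scaler_sumr; apply: eq_bigr => j _; rewrite scalerA.
Qed.

Lemma convhull_dotp_le w M q : (forall i : 'I_(size S), dotp w S`_i <= M) ->
  P q -> dotp w q <= M.
Proof.
move=> S_le [lam [lam_ge0 [lam1 ->]]].
rewrite linear_sum -[M]mul1r -lam1 mulr_suml; apply: ler_sum => i _.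
by rewrite linearZ /=; apply: ler_wpM2l.
Qed.

Lemma face_subset F : is_face P F -> F `<=` P.
Proof. by move=> [w ->] x []. Qed.

Lemma face_nonempty F x : is_face P F -> P x -> exists y, F y.
Proof.
move=> [w ->] [lam [_ [lam1 _]]].
have [i0 _] : exists i0 : 'I_(size S), true.
  case: (pickP (@predT 'I_(size S))) => [i0 _|none]; first by exists i0.
  by move: lam1; rewrite big_pred0 // => /eqP; rewrite eq_sym oner_eq0.
case: (@arg_maxP _ _ _ i0 predT (fun i => dotp w S`_i)) => // j _ j_max.
exists S`_j; split => [|q]; first exact: mem_convhull.
by apply: convhull_dotp_le => i; exact: j_max.
Qed.

Lemma face_setI F1 F2 x : is_face P F1 -> is_face P F2 -> F1 x -> F2 x ->
  is_face P (F1 `&` F2).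
Proof.
move=> [w1 ->] [w2 ->] [Px x_max1] [_ x_max2]; exists (w1 + w2).
apply/seteqP; split => p /=.
  move=> [[Pp p_max1] [_ p_max2]]; split => // q Pq.
  by rewrite !dotpDl lerD ?p_max1 ?p_max2.
move=> [Pp p_max]; have := p_max x Px; rewrite !dotpDl => x_le_p.
have p_max1 := x_max1 p Pp; have p_max2 := x_max2 p Pp.
have eq1 : dotp w1 p = dotp w1 x by apply/eqP; rewrite eq_le p_max1 /=; lra.
have eq2 : dotp w2 p = dotp w2 x by apply/eqP; rewrite eq_le p_max2 /=; lra.
by split; split => // q Pq; rewrite ?eq1 ?eq2 ?x_max1 ?x_max2.
Qed.

Lemma face_convex G k (mu : 'I_k -> R) (q : 'I_k -> 'rV[R]_n) :
  is_face P G -> (forall i, 0 <= mu i) -> \sum_i mu i = 1 ->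
  (forall i, G (q i)) -> G (\sum_i mu i *: q i).
Proof.
move=> [w ->] mu_ge0 mu1 Gq; split.
  by apply: convhull_comb => // i; exact: (Gq i).1.
move=> p Pp; rewrite linear_sum -[dotp w p]mul1r -mu1 mulr_suml.
apply: ler_sum => i _; rewrite linearZ /=.
by apply: ler_wpM2l => //; exact: (Gq i).2.
Qed.

Lemma face_extremal G k (mu : 'I_k -> R) (q : 'I_k -> 'rV[R]_n) :
  is_face P G -> (forall i, 0 < mu i) -> \sum_i mu i = 1 ->
  (forall i, P (q i)) -> G (\sum_i mu i *: q i) -> forall i, G (q i).
Proof.
move=> [w ->] mu_gt0 mu1 Pq [_ comb_max] i; split => // p Pp.
have comb_dotp : \sum_i mu i * dotp w (q i) = dotp w (\sum_i mu i *: q i).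
  by rewrite linear_sum; apply: eq_bigr => j _; rewrite linearZ.
rewrite (mean_eq_ub mu_gt0 mu1 _ comb_dotp) ?comb_max // => j.
exact/comb_max/Pq.
Qed.

Lemma open_face_nonempty F x : is_face P F -> P x -> exists b, open_face P F b.
Proof.
move=> F_face Px; have [y Fy] := face_nonempty F_face Px.
have [d dimF] := affdim_exists Fy; have [p [pF p_indep]] := dimF.1.
pose mu (i : 'I_d.+1) : R := d.+1%:R^-1.
have mu_gt0 i : 0 < mu i by rewrite invr_gt0 ltr0n.
have mu1 : \sum_i mu i = 1.
  by rewrite sumr_const card_ord -[_ *+ _]mulr_natr mulVf // pnatr_eq0.
(* The barycentre of an affine basis of F: every face through it contains the
   whole basis, so it has dimension at least that of F. *)
exists (\sum_i mu i *: p i); split.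
  by apply: face_convex => // i; exact: ltW.
move=> G G_face Gb dG dF dimG dimF'; apply/negP; rewrite -leqNgt.
rewrite -(affdim_unique dimF dimF'); apply: (affdim_max dimG).
exists p; split => //; apply: face_extremal G_face mu_gt0 mu1 _ Gb => i.
exact: (face_subset F_face (pF i)).
Qed.

Lemma open_face_sub F1 F2 x : is_face P F1 -> is_face P F2 ->
  open_face P F1 x -> F2 x -> F1 `<=` F2.
Proof.
move=> F1_face F2_face [F1x x_open] F2x z F1z; apply: contrapT => F2z_n.
have G_face := face_setI F1_face F2_face F1x F2x.
have [dG dimG] := affdim_exists (conj F1x F2x : (F1 `&` F2) x).
have [dF dimF] := affdim_exists F1x.
apply: (x_open _ G_face (conj F1x F2x) _ _ dimG dimF).
have [p [pG p_indep]] := dimG.1.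
(* Appending z, which lies off the supporting hyperplane of F2, to an affine
   basis of F1 `&` F2 gives dG + 2 affinely independent points of F1. *)
pose f (i : 'I_dG.+2) := if insub (i : nat) is Some j then p j else z.
have fW (i : 'I_dG.+1) : f (widen_ord (leqnSn _) i) = p i by rewrite /f /= valK.
have f0 : f ord0 = p ord0 by rewrite -(fW ord0); congr f; apply: val_inj.
have f_max : f ord_max = z by rewrite /f insubN /= ?ltnn.
have [w2 eF2] := F2_face.
have [Px x_max] : P x /\ forall q, P q -> dotp w2 q <= dotp w2 x.
  by move: F2x; rewrite eF2.
have dotp_F2 q : F2 q -> dotp w2 q = dotp w2 x.
  by rewrite eF2 => -[Pq q_max]; apply/eqP; rewrite eq_le x_max ?q_max.
apply: (affdim_max dimF); exists f; split.
  by move=> i; rewrite /f; case: insub => [j|]; [exact: (pG j).1 | exact: F1z].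
apply: (aff_indep_extend (w := w2)).
- by under eq_fun do rewrite fW.
- by move=> i; rewrite fW f0 (dotp_F2 _ (pG i).2) (dotp_F2 _ (pG ord0).2).
rewrite f_max f0 (dotp_F2 _ (pG ord0).2); apply/eqP => z_eq; apply: F2z_n.
rewrite eF2; split=> [|q Pq]; first exact: (face_subset F1_face F1z).
by rewrite z_eq x_max.
Qed.
End Faces.

Section Factory.
Variables (R : realType) (n : nat) (T : tree R n).
Implicit Types (w x : 'rV[R]_n) (t : seq bool) (f g : seq bool -> R).

Definition leaf_label t : 'rV[R]_n := if T t is Leaf v then v else 0.

Definition leaf_sum f K :=
  \sum_(m < K) \sum_(t : m.-tuple bool | is_leaf T t) f t.

Lemma leaf_sumB f g K : leaf_sum (f \- g) K = leaf_sum f K - leaf_sum g K.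
Proof. by rewrite -sumrB; apply: eq_bigr => m _; rewrite -sumrB. Qed.

Lemma leaf_sumMl a f K : leaf_sum (fun t => a * f t) K = a * leaf_sum f K.
Proof. by rewrite mulr_sumr; apply: eq_bigr => m _; rewrite mulr_sumr. Qed.

Lemma leaf_sum_sum k (f : 'I_k -> seq bool -> R) K :
  \sum_(i < k) leaf_sum (f i) K = leaf_sum (fun t => \sum_(i < k) f i t) K.
Proof.
rewrite exchange_big; apply: eq_bigr => m _.
by rewrite exchange_big.
Qed.

Lemma term_probE x K : term_prob T x K = leaf_sum (pathprob T x) K.
Proof.
by rewrite /term_prob /leaf_sum; apply: eq_bigr => m _; rewrite [RHS]big_mkcond.
Qed.

Lemma partial_meanE x i K :
  partial_mean T x i K =
  leaf_sum (fun t => pathprob T x t * leaf_label t 0 i) K.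
Proof.
rewrite /partial_mean /leaf_sum; apply: eq_bigr => m _.
rewrite [RHS]big_mkcond; apply: eq_bigr => t _.
by rewrite /leaf_label; case: ifP => [/andP [_]|_]; case: (T t).
Qed.

Lemma leaf_sum_nondecreasing f : (forall t, is_leaf T t -> 0 <= f t) ->
  nondecreasing_seq (leaf_sum f).
Proof.
move=> f_ge0; apply/nondecreasing_seqP => K.
by rewrite /leaf_sum big_ord_recr lerDl; apply: sumr_ge0 => t /f_ge0.
Qed.

Lemma leaf_sum_cvg0 f : (forall t, is_leaf T t -> 0 <= f t) ->
  leaf_sum f K @[K --> \oo] --> 0 -> forall t, is_leaf T t -> f t = 0.
Proof.
move=> f_ge0 f_cvg t t_leaf.
have sum0 K : leaf_sum f K = 0.
  apply/eqP; rewrite eq_le; apply/andP; split.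
    have := leaf_sum_nondecreasing f_ge0.
    move/nondecreasing_cvgn_le/(_ (cvgP _ f_cvg) K).
    by rewrite (cvg_lim _ f_cvg).
  by apply: sumr_ge0 => m _; apply: sumr_ge0 => t' /f_ge0.
have layer0 : \sum_(t' : (size t).-tuple bool | is_leaf T t') f t' = 0.
  move: (sum0 (size t).+1).
  by rewrite /leaf_sum big_ord_recr /= -/(leaf_sum f _) sum0 add0r.
have f_ge0' (t' : (size t).-tuple bool) := f_ge0 t'.
exact: (psumr_eq0P f_ge0' layer0 (i := in_tuple t)).
Qed.

Lemma in_tree_take s k : in_tree T s -> in_tree T (take k s).
Proof.
move=> s_tree j; rewrite size_take_min leq_min => /andP [lt_jk lt_js].
by rewrite take_takel ?s_tree // ltnW.
Qed.

Lemma leaf_in_tree t : is_leaf T t -> in_tree T t.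
Proof.
by case/andP => /forallP t_int _ k lt_kt; exact: (t_int (Ordinal lt_kt)).
Qed.

Lemma leaf_label_out V t :
  factory_with_outputs V T -> is_leaf T t -> V (leaf_label t).
Proof.
move=> T_out t_leaf; have := T_out _ (leaf_in_tree t_leaf).
by move: t_leaf => /andP [_]; rewrite /leaf_label; case: (T t).
Qed.

Lemma pathprob_gt0 V x t : factory_with_outputs V T -> cube01_open x ->
  is_leaf T t -> 0 < pathprob T x t.
Proof.
move=> T_out x_open t_leaf; apply: prodr_gt0 => k _.
have := T_out _ (in_tree_take (k := k) (leaf_in_tree t_leaf)).
move: t_leaf => /andP [/forallP/(_ k) + _].
case: (T (take k t)) => [i|c|//] _ /=.
  move=> _; have /andP [x_gt0 x_lt1] := x_open i.
  by case: (nth false t k); rewrite ?subr_gt0.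
by case/andP; case: (nth false t k); rewrite ?subr_gt0.
Qed.

Variable S : seq 'rV[R]_n.
Notation P := (convhull S).

Lemma factory_mean_cvg w x :
  bernoulli_factory_for P T -> P x -> cube01_open x ->
  leaf_sum (fun t => pathprob T x t * dotp w (leaf_label t)) K @[K --> \oo]
    --> dotp w x.
Proof.
move=> [_ T_cvg] Px x_open.
have meanE K : \sum_(i < n) w 0 i * partial_mean T x i K =
               leaf_sum (fun t => pathprob T x t * dotp w (leaf_label t)) K.
  under eq_bigr do rewrite partial_meanE -leaf_sumMl.
  rewrite leaf_sum_sum; apply: eq_bigr => m _; apply: eq_bigr => t _.
  by rewrite /dotp mulr_sumr; apply: eq_bigr => i _; rewrite mulrCA.
under eq_cvg do rewrite -meanE.
apply: cvg_big => [|i _]; first exact: add_continuous.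
by apply: cvgMl_tmp; exact: (T_cvg x Px x_open).2.
Qed.

Lemma factory_leaves_on_face w x :
  bernoulli_factory_for P T -> P x -> cube01_open x ->
  (forall q, P q -> dotp w q <= dotp w x) ->
  forall t, is_leaf T t -> dotp w (leaf_label t) = dotp w x.
Proof.
move=> T_fac Px x_open x_max t t_leaf.
pose gap t := pathprob T x t * (dotp w x - dotp w (leaf_label t)).
have gap_ge0 t' : is_leaf T t' -> 0 <= gap t'.
  move=> t'_leaf; apply: mulr_ge0; first exact/ltW/(pathprob_gt0 T_fac.1).
  have := face_subset (leaf_label_out T_fac.1 t'_leaf) (erefl (leaf_label t')).
  by rewrite subr_ge0; exact: x_max.
have gapE : leaf_sum gap = fun K => dotp w x * term_prob T x K -
    leaf_sum (fun t => pathprob T x t * dotp w (leaf_label t)) K.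
  apply: funext => K; rewrite term_probE -leaf_sumMl -leaf_sumB.
  by apply: eq_bigr => m _; apply: eq_bigr => t' _; rewrite /gap mulrBr mulrC.
have gap_cvg : leaf_sum gap K @[K --> \oo] --> dotp w x * 1 - dotp w x.
  rewrite gapE; apply: cvgB; last exact: factory_mean_cvg.
  by apply: cvgMl_tmp; exact: (T_fac.2 x Px x_open).1.
rewrite mulr1 subrr in gap_cvg.
have := leaf_sum_cvg0 gap_ge0 gap_cvg t_leaf.
move/eqP; rewrite mulf_eq0 gt_eqF ?(pathprob_gt0 T_fac.1) //= subr_eq0.
by move/eqP.
Qed.

Lemma factory_mean_on_hyperplane w M z : bernoulli_factory_for P T ->
  (forall t, is_leaf T t -> dotp w (leaf_label t) = M) ->
  P z -> cube01_open z -> dotp w z = M.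
Proof.
move=> T_fac on_hyp Pz z_open.
have meanE : leaf_sum (fun t => pathprob T z t * dotp w (leaf_label t)) =
              fun K => M * term_prob T z K.
  apply: funext => K; rewrite term_probE -leaf_sumMl; apply: eq_bigr => m _.
  by apply: eq_bigr => t /on_hyp ->; rewrite mulrC.
have := factory_mean_cvg (w := w) T_fac Pz z_open; rewrite meanE => mean_cvg.
apply: (cvg_unique _ mean_cvg) => //.
suff : M * term_prob T z K @[K --> \oo] --> M * 1 by rewrite mulr1.
by apply: cvgMl_tmp; exact: (T_fac.2 z Pz z_open).1.
Qed.

Lemma factory_face_mem F x y : bernoulli_factory_for P T -> is_face P F ->
  F x -> cube01_open x -> P y -> cube01_open y -> F y.
Proof.
move=> T_fac [w ->] [Px x_max] x_open Py y_open; split => // q Pq.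
have leaves_on_face := factory_leaves_on_face T_fac Px x_open x_max.
by rewrite (factory_mean_on_hyperplane T_fac leaves_on_face Py y_open) x_max.
Qed.
End Factory.

Theorem lemmaB5 (R : realType) (n : nat) (S : seq 'rV[R]_n)
    (F1 F2 : set 'rV[R]_n) :
  convhull S `<=` (@cube01 R n) ->
  is_face (convhull S) F1 -> is_face (convhull S) F2 ->
  open_face (convhull S) F1 <> open_face (convhull S) F2 ->
  open_face (convhull S) F1 `<=` (@cube01_open R n) ->
  open_face (convhull S) F2 `<=` (@cube01_open R n) ->
  ~ (exists T : tree R n, bernoulli_factory_for (convhull S) T).
Proof.
move=> _ F1_face F2_face F12_neq F1_open F2_open [T T_fac].
have [z Pz] : exists z, convhull S z.
  apply: contrapT => P0; apply: F12_neq; apply/seteqP.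
  split=> y [Fy _]; case: P0; exists y;
    by [exact: (face_subset F1_face Fy) | exact: (face_subset F2_face Fy)].
have [x F1x] := open_face_nonempty F1_face Pz.
have [y F2y] := open_face_nonempty F2_face Pz.
have Px := face_subset F1_face F1x.1; have Py := face_subset F2_face F2y.1.
have x_open := F1_open x F1x; have y_open := F2_open y F2y.
have F2x := factory_face_mem T_fac F2_face F2y.1 y_open Px x_open.
have F1y := factory_face_mem T_fac F1_face F1x.1 x_open Py y_open.
apply: F12_neq; congr open_face; apply/seteqP; split.
  exact: open_face_sub F1_face F2_face F1x F2x.
exact: open_face_sub F2_face F1_face F2y F1y.
Qed.
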